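(* Let $K_1,K_2$ be non-empty disjoint compact subsets of $\mathbf S^3$. There is $C\ge1$ such that for any $x\in K_1$, $y\in K_2$ and any $w\in\mathcal L_{\mathbb C}$ whose chain $L_w$ passes through $x$ and meets $K_2$, \[C^{-1}d(y,L_w)\le d_E(\pi_x(y),w)\le C\,d(y,L_w).\]
   Context: On $\mathbb{C}^3$: $u\cdot v=\sum u_i\bar v_i$, $\|u\|=\sqrt{u\cdot u}$, $\langle u,v\rangle=u_0\bar v_0-u_1\bar v_1-u_2\bar v_2$, $q(u)=\langle u,u\rangle$, $\|u\wedge v\|^2=\|u\|^2\|v\|^2-|u\cdot v|^2$. On $\mathbb P^2_{\mathbb C}$, $d_E(u,v)=\|u\wedge v\|/(\|u\|\|v\|)$. $\mathbf S^3=\{u:q(u)=0\}$ with visual metric $d(u,v)=\sqrt{|\langle u,v\rangle|/(\|u\|\|v\|)}$. $\mathcal L_{\mathbb C}=\{w:q(w)<0\}$; $w^\perp=\{u:\langle u,w\rangle=0\}$ and $L_w=w^\perp\cap\mathbf S^3$ (a chain). For $x\in\mathbf S^3$ and $y\in\mathbf S^3\setminus\{x\}$, $\pi_x(y)$ is the unique intersection point of the projective lines $x^\perp$ and $y^\perp$. $d(y,L_w)=\inf_{z\in L_w}d(y,z)$. *)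

From HB Require Import structures.
From mathcomp Require Import all_boot all_order all_algebra.
From mathcomp Require Import all_classical all_reals all_analysis.
From mathcomp Require Import complex.
Set Implicit Arguments. Unset Strict Implicit. Unset Printing Implicit Defensive.
Import Order.TTheory GRing.Theory Num.Theory.
Import ComplexField.
Import numFieldNormedType.Exports.
Local Open Scope classical_set_scope.
Local Open Scope ring_scope.

Section Defs.
Variable R : realType.
Local Notation C := R[i].

Definition vec := 'rV[C]_3.

Definition hdot (u v : vec) : C := \sum_(i < 3) u 0 i * conjc (v 0 i).

Definition enorm (u : vec) : R := Num.sqrt (complex.Re (hdot u u)).

Definition wedge_norm (u v : vec) : R :=
  Num.sqrt (enorm u ^+ 2 * enorm v ^+ 2 - Normc.normc (hdot u v) ^+ 2).

(* chordal distance d_E on P^2_C, computed on representatives *)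
Definition dE (u v : vec) : R := wedge_norm u v / (enorm u * enorm v).

Definition herm (u v : vec) : C :=
  u 0 0 * conjc (v 0 0) - u 0 1 * conjc (v 0 1) - u 0 2%:R * conjc (v 0 2%:R).

(* q(u) = <u,u> (a real number; we take its real part) *)
Definition q (u : vec) : R := complex.Re (herm u u).

(* representatives of points of S^3 = {q = 0} in P^2_C *)
Definition S3 (u : vec) : Prop := u != 0 /\ herm u u = 0.

(* representatives of points of L_C = {q < 0} *)
Definition LC (w : vec) : Prop := q w < 0.

Definition chain (w : vec) : set vec := [set z | S3 z /\ herm z w = 0].

(* visual metric on S^3 *)
Definition dvis (u v : vec) : R :=
  Num.sqrt (Normc.normc (herm u v) / (enorm u * enorm v)).

Definition dist_chain (y w : vec) : R := inf [set dvis y z | z in chain w].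

(* p represents the point pi_x(y) = x^perp cap y^perp  (for y <> x in P^2) *)
Definition is_pi (x y p : vec) : Prop := p != 0 /\ herm p x = 0 /\ herm p y = 0.

Definition proj_eq (u v : vec) : Prop := exists c : C, c != 0 /\ v = c *: u.

(* compactness in P^2_C (metrized by d_E), stated sequentially:
   every sequence in K has a subsequence converging in P^2 to a point of K *)
Definition pcompact (K : set vec) : Prop :=
  forall u : nat -> vec, (forall n, K (u n)) ->
  exists (phi : nat -> nat) (z : vec),
    (forall n, (phi n < phi n.+1)%N) /\ K z /\
    dE (u (phi n)) z @[n --> \oo] --> (0 : R).

End Defs.

From mathcomp Require Import all_boot all_order all_algebra.
From mathcomp Require Import all_classical all_reals all_analysis.
From mathcomp Require Import complex.
From mathcomp Require Import ring lra.
Import Order.TTheory GRing.Theory Num.Theory ComplexField.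
Import numFieldNormedType.Exports.
Local Open Scope classical_set_scope.
Local Open Scope ring_scope.
Set Implicit Arguments. Unset Strict Implicit. Unset Printing Implicit Defensive.

(* Everything is invariant under rescaling representatives. By compactness, and because
   orthogonal null vectors are proportional, [|<x,y>| / (|x| |y|)] is bounded below on
   [K1 x K2], so [|x| |y| <= E |<x,y>|] for a uniform [E >= 1]. As [p = pi_x(y)] spans
   [{x,y}^perp], every [w] with [<x,w> = 0] is [alpha x + gamma p] and every point of
   [L_w] is [z = lambda x + mu y + nu p]; then [<z,w> = 0] and [<z,z> = 0] control
   [mu] and [nu] by [lambda]. With [u = |alpha| |x|] and [v = |gamma| |p|], both
   [d_E(p,w)^2] and [d(y,L_w)^2] are comparable to [(u / (u + v))^2] up to powers of [E]:
   for [d(y,L_w)] the lower bound comes from these constraints, the upper bound from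
   [z = x] if [u >= v] and from the point of [L_w] of the form [lambda x + y + nu p]
   otherwise. *)

Section Scalars.
Variable R : realType.
Local Notation C := R[i].
Local Notation normc := (@Normc.normc R).

Lemma conjcD (a b : C) : conjc (a + b) = conjc a + conjc b. Proof. exact: rmorphD. Qed.
Lemma conjcB (a b : C) : conjc (a - b) = conjc a - conjc b. Proof. exact: rmorphB. Qed.
Lemma conjcN (a : C) : conjc (- a) = - conjc a. Proof. exact: rmorphN. Qed.
Lemma conjcM (a b : C) : conjc (a * b) = conjc a * conjc b. Proof. exact: rmorphM. Qed.

Lemma realcD (a b : R) : (a + b)%:C%C = a%:C%C + b%:C%C :> C. Proof. exact: rmorphD. Qed.
Lemma realcB (a b : R) : (a - b)%:C%C = a%:C%C - b%:C%C :> C. Proof. exact: rmorphB. Qed.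
Lemma realcN (a : R) : (- a)%:C%C = - a%:C%C :> C. Proof. exact: rmorphN. Qed.
Lemma realcM (a b : R) : (a * b)%:C%C = a%:C%C * b%:C%C :> C. Proof. exact: rmorphM. Qed.

Lemma realc_inj (a b : R) : a%:C%C = b%:C%C :> C -> a = b.
Proof. by case. Qed.

Lemma normc_ge0 (c : C) : 0 <= normc c.
Proof. by case: c => ? ?; rewrite /= sqrtr_ge0. Qed.

Lemma normc_gt0 (c : C) : c != 0 -> 0 < normc c.
Proof.
move=> c0; rewrite lt_def normc_ge0 andbT.
by apply: contra c0 => /eqP /Normc.eq0_normc ->.
Qed.

Lemma normc_conjc (c : C) : normc (conjc c) = normc c.
Proof. by case: c => ? ? /=; rewrite sqrrN. Qed.

Lemma normc_real (a : R) : normc a%:C%C = `|a|.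
Proof. by rewrite /= expr0n /= addr0 sqrtr_sqr. Qed.

Lemma mulcJ_normc (c : C) : c * conjc c = (normc c ^+ 2)%:C%C.
Proof.
case: c => a b; rewrite /= sqr_sqrtr ?addr_ge0 ?sqr_ge0 //.
by apply/eqP; rewrite eq_complex /=; apply/andP; split; apply/eqP; ring.
Qed.

Lemma addcJ_real (c : C) : c + conjc c = (2 * complex.Re c)%:C%C.
Proof. by case: c => a b; apply/eqP; rewrite eq_complex /=; apply/andP; split; apply/eqP; ring. Qed.

Lemma Re_le_normc (c : C) : complex.Re c <= normc c.
Proof.
case: c => a b /=; apply: le_trans (ler_norm a) _.
by rewrite -sqrtr_sqr ler_sqrt ?addr_ge0 ?sqr_ge0 // lerDl sqr_ge0.
Qed.

Lemma sqr_normc_eq0 (c : C) : normc c ^+ 2 = 0 -> c = 0.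
Proof. by move/eqP; rewrite sqrf_eq0 => /eqP /Normc.eq0_normc. Qed.

End Scalars.

Ltac conjc_simpl := rewrite ?(conjcD, conjcB, conjcN, conjcM, conjcK, conjc0).

Section Vectors.
Variable R : realType.
Local Notation C := R[i].
Local Notation V := (vec R).
Local Notation normc := (@Normc.normc R).

Lemma vec_ext (u v : V) :
  u 0 0 = v 0 0 -> u 0 1 = v 0 1 -> u 0 2%:R = v 0 2%:R -> u = v.
Proof.
move=> h0 h1 h2; apply/matrixP => i j; rewrite !ord1.
case: j => [[|[|[|j]]] hj] //.
- by rewrite (_ : Ordinal hj = 0) //; apply: val_inj.
- by rewrite (_ : Ordinal hj = 1) //; apply: val_inj.
- by rewrite (_ : Ordinal hj = 2%:R) //; apply: val_inj.
Qed.

Lemma vec_neq0 (u : V) : u != 0 -> [\/ u 0 0 != 0, u 0 1 != 0 | u 0 2%:R != 0].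
Proof.
move=> u0; have [h0|] := eqVneq (u 0 0) 0; last by constructor 1.
have [h1|] := eqVneq (u 0 1) 0; last by constructor 2.
have [h2|] := eqVneq (u 0 2%:R) 0; last by constructor 3.
by case/eqP: u0; apply: vec_ext; rewrite mxE.
Qed.

Lemma hdotE (u v : V) : hdot u v =
  u 0 0 * conjc (v 0 0) + u 0 1 * conjc (v 0 1) + u 0 2%:R * conjc (v 0 2%:R).
Proof.
rewrite /hdot !big_ord_recr big_ord0 /= add0r.
by do 3 f_equal; (try f_equal); f_equal; apply: val_inj.
Qed.

Lemma hdot_conj (u v : V) : hdot v u = conjc (hdot u v).
Proof. by rewrite !hdotE; conjc_simpl; ring. Qed.

Lemma herm_conj (u v : V) : herm v u = conjc (herm u v).
Proof. by rewrite /herm; conjc_simpl; ring. Qed.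

Lemma hdotDl (u v w : V) : hdot (u + v) w = hdot u w + hdot v w.
Proof. by rewrite !hdotE !mxE; ring. Qed.
Lemma hdotBl (u v w : V) : hdot (u - v) w = hdot u w - hdot v w.
Proof. by rewrite !hdotE !mxE; ring. Qed.
Lemma hdotZl (c : C) (u w : V) : hdot (c *: u) w = c * hdot u w.
Proof. by rewrite !hdotE !mxE; ring. Qed.
Lemma hdotDr (u v w : V) : hdot w (u + v) = hdot w u + hdot w v.
Proof. by rewrite !hdotE !mxE; conjc_simpl; ring. Qed.
Lemma hdotBr (u v w : V) : hdot w (u - v) = hdot w u - hdot w v.
Proof. by rewrite !hdotE !mxE; conjc_simpl; ring. Qed.
Lemma hdotZr (c : C) (u w : V) : hdot w (c *: u) = conjc c * hdot w u.
Proof. by rewrite !hdotE !mxE; conjc_simpl; ring. Qed.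

Lemma hermDl (u v w : V) : herm (u + v) w = herm u w + herm v w.
Proof. by rewrite /herm !mxE; ring. Qed.
Lemma hermBl (u v w : V) : herm (u - v) w = herm u w - herm v w.
Proof. by rewrite /herm !mxE; ring. Qed.
Lemma hermZl (c : C) (u w : V) : herm (c *: u) w = c * herm u w.
Proof. by rewrite /herm !mxE; ring. Qed.
Lemma hermDr (u v w : V) : herm w (u + v) = herm w u + herm w v.
Proof. by rewrite /herm !mxE; conjc_simpl; ring. Qed.
Lemma hermZr (c : C) (u w : V) : herm w (c *: u) = conjc c * herm w u.
Proof. by rewrite /herm !mxE; conjc_simpl; ring. Qed.

Lemma herm0l (u : V) : herm 0 u = 0.
Proof. by rewrite /herm !mxE; ring. Qed.

Lemma sqr_enorm (u : V) :
  enorm u ^+ 2 = normc (u 0 0) ^+ 2 + normc (u 0 1) ^+ 2 + normc (u 0 2%:R) ^+ 2.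
Proof.
rewrite /enorm hdotE !mulcJ_normc -!realcD sqr_sqrtr //.
by rewrite !addr_ge0 ?sqr_ge0.
Qed.

Lemma hdot_self (u : V) : hdot u u = (enorm u ^+ 2)%:C%C.
Proof. by rewrite sqr_enorm hdotE !mulcJ_normc !realcD. Qed.

Lemma herm_self (u : V) :
  herm u u = (normc (u 0 0) ^+ 2 - normc (u 0 1) ^+ 2 - normc (u 0 2%:R) ^+ 2)%:C%C.
Proof. by rewrite /herm !mulcJ_normc !realcB. Qed.

Lemma enorm_ge0 (u : V) : 0 <= enorm u.
Proof. exact: sqrtr_ge0. Qed.

Lemma enorm_gt0 (u : V) : u != 0 -> 0 < enorm u.
Proof.
move=> u0; rewrite lt_def enorm_ge0 andbT; apply: contra u0 => /eqP u0.
have := sqr_enorm u; rewrite u0 expr0n /= => s0.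
have := sqr_ge0 (normc (u 0 0)); have := sqr_ge0 (normc (u 0 1)).
have := sqr_ge0 (normc (u 0 2%:R)) => ? ? ?.
apply/eqP; apply: vec_ext; rewrite mxE; apply: sqr_normc_eq0; lra.
Qed.

Lemma enormZ (c : C) (u : V) : enorm (c *: u) = normc c * enorm u.
Proof.
apply/eqP; rewrite -(@eqrXn2 _ 2) ?mulr_ge0 ?enorm_ge0 ?normc_ge0 //; apply/eqP.
have : hdot (c *: u) (c *: u) = ((normc c * enorm u) ^+ 2)%:C%C.
  by rewrite hdotZl hdotZr hdot_self mulrA mulcJ_normc -realcM exprMn.
by rewrite hdot_self => /realc_inj.
Qed.

Lemma normc_hdot_le (u v : V) : normc (hdot u v) <= enorm u * enorm v.
Proof.
rewrite -ler_sqr ?nnegrE ?normc_ge0 ?mulr_ge0 ?enorm_ge0 //.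
set t1 := u 0 0 * v 0 1 - u 0 1 * v 0 0.
set t2 := u 0 0 * v 0 2%:R - u 0 2%:R * v 0 0.
set t3 := u 0 1 * v 0 2%:R - u 0 2%:R * v 0 1.
have lagrange : hdot u u * hdot v v - hdot u v * conjc (hdot u v) =
    t1 * conjc t1 + t2 * conjc t2 + t3 * conjc t3.
  by rewrite /t1 /t2 /t3 !hdotE; conjc_simpl; ring.
rewrite !hdot_self !mulcJ_normc -!realcM -!realcB -!realcD in lagrange.
move/realc_inj: lagrange; rewrite exprMn => lagrange.
have := sqr_ge0 (normc t1); have := sqr_ge0 (normc t2); have := sqr_ge0 (normc t3).
lra.
Qed.

Lemma normc_herm_le (u v : V) : normc (herm u v) <= enorm u * enorm v.
Proof.
rewrite -ler_sqr ?nnegrE ?normc_ge0 ?mulr_ge0 ?enorm_ge0 //.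
set t1 := u 0 0 * v 0 1 + u 0 1 * v 0 0.
set t2 := u 0 0 * v 0 2%:R + u 0 2%:R * v 0 0.
set t3 := u 0 1 * v 0 2%:R - u 0 2%:R * v 0 1.
have lagrange : hdot u u * hdot v v - herm u v * conjc (herm u v) =
    t1 * conjc t1 + t2 * conjc t2 + t3 * conjc t3.
  by rewrite /t1 /t2 /t3 !hdotE /herm; conjc_simpl; ring.
rewrite !hdot_self !mulcJ_normc -!realcM -!realcB -!realcD in lagrange.
move/realc_inj: lagrange; rewrite exprMn => lagrange.
have := sqr_ge0 (normc t1); have := sqr_ge0 (normc t2); have := sqr_ge0 (normc t3).
lra.
Qed.

Lemma enormD (u v : V) : enorm (u + v) <= enorm u + enorm v.
Proof.
rewrite -ler_sqr ?nnegrE ?addr_ge0 ?enorm_ge0 //.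
have expand : hdot (u + v) (u + v) = hdot u u + hdot v v + (hdot u v + conjc (hdot u v)).
  by rewrite hdotDl !hdotDr (hdot_conj u v); ring.
rewrite addcJ_real !hdot_self -!realcD in expand; move/realc_inj: expand => ->.
have := Re_le_normc (hdot u v); have := normc_hdot_le u v.
have := enorm_ge0 u; have := enorm_ge0 v; nra.
Qed.

End Vectors.

Section CrossProduct.
Variable R : realType.
Local Notation C := R[i].
Local Notation V := (vec R).

(* The cross product adapted to [herm] (conjugated, with the signs of the form), so that
   it is [herm]-orthogonal to both factors. *)
Definition hcross (x y : V) : V := \row_(j < 3)
  (if j == 0 then conjc (x 0 1) * conjc (y 0 2%:R) - conjc (x 0 2%:R) * conjc (y 0 1)
   else if j == 1 then conjc (x 0 0) * conjc (y 0 2%:R) - conjc (x 0 2%:R) * conjc (y 0 0)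
   else conjc (x 0 1) * conjc (y 0 0) - conjc (x 0 0) * conjc (y 0 1)).

Ltac hcross_expand := rewrite /hcross !mxE /=.

Lemma herm_hcross_self (x y : V) :
  herm (hcross x y) (hcross x y) = herm x x * herm y y - herm x y * herm y x.
Proof. by rewrite /herm; hcross_expand; conjc_simpl; ring. Qed.

Lemma hdot_hcross_self (x y : V) :
  hdot (hcross x y) (hcross x y) + hdot y x * conjc (hdot y x) = hdot x x * hdot y y.
Proof. by rewrite !hdotE; hcross_expand; conjc_simpl; ring. Qed.

Lemma herm_perp2_hcross (x y r : V) : herm r x = 0 -> herm r y = 0 ->
  hcross x y != 0 -> exists c : C, r = c *: hcross x y.
Proof.
move=> rx ry Q0; set Q := hcross x y.
have e0 : r 0 1 * Q 0 2%:R - r 0 2%:R * Q 0 1 =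
    conjc (x 0 0) * herm r y - conjc (y 0 0) * herm r x.
  by rewrite /Q /herm; hcross_expand; ring.
have e1 : r 0 2%:R * Q 0 0 - r 0 0 * Q 0 2%:R =
    conjc (y 0 1) * herm r x - conjc (x 0 1) * herm r y.
  by rewrite /Q /herm; hcross_expand; ring.
have e2 : r 0 0 * Q 0 1 - r 0 1 * Q 0 0 =
    conjc (y 0 2%:R) * herm r x - conjc (x 0 2%:R) * herm r y.
  by rewrite /Q /herm; hcross_expand; ring.
rewrite rx ry !mulr0 subrr in e0 e1 e2.
move/eqP: e0; move/eqP: e1; move/eqP: e2; rewrite !subr_eq0 => /eqP e2 /eqP e1 /eqP e0.
case: (vec_neq0 Q0) => Qk.
- exists (r 0 0 / Q 0 0); apply: vec_ext; rewrite mxE mulrAC ?e2 -?e1 mulfK //.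
- exists (r 0 1 / Q 0 1); apply: vec_ext; rewrite mxE mulrAC -?e2 ?e0 mulfK //.
- exists (r 0 2%:R / Q 0 2%:R); apply: vec_ext; rewrite mxE mulrAC ?e1 -?e0 mulfK //.
Qed.

End CrossProduct.

Section NullVectors.
Variable R : realType.
Local Notation C := R[i].
Local Notation V := (vec R).
Local Notation normc := (@Normc.normc R).

Lemma S3_coord0 (a : V) : S3 a -> a 0 0 != 0.
Proof.
case=> a0 aa; apply: contra a0 => /eqP a00.
move: aa; rewrite herm_self a00 Normc.normc0 expr0n /= sub0r => /realc_inj aa.
have := sqr_ge0 (normc (a 0 1)); have := sqr_ge0 (normc (a 0 2%:R)) => ? ?.
apply/eqP; apply: vec_ext; rewrite mxE //; apply: sqr_normc_eq0; lra.
Qed.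

Lemma S3_perp_proj_eq (a b : V) : S3 a -> S3 b -> herm a b = 0 -> proj_eq a b.
Proof.
move=> Sa Sb ab; have a0 := S3_coord0 Sa; have b0 := S3_coord0 Sb.
case: Sa Sb => _ aa [_ bb].
have null_eq (u v : V) : herm u v = 0 ->
    u 0 0 * conjc (v 0 0) = u 0 1 * conjc (v 0 1) + u 0 2%:R * conjc (v 0 2%:R).
  by move=> uv; apply/eqP; rewrite -subr_eq0 opprD addrA -/(herm u v) uv.
have Ea := null_eq _ _ aa; have Eb := null_eq _ _ bb; have Eab := null_eq _ _ ab.
set t := a 0 1 * b 0 2%:R - a 0 2%:R * b 0 1.
(* Equality case of Cauchy-Schwarz for the last two coordinates: both sides are
   [|a_0 b_0|^2] by the three null relations. *)
have t0 : t = 0.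
  apply: sqr_normc_eq0; apply: realc_inj; rewrite -mulcJ_normc.
  have -> : t * conjc t =
      (a 0 1 * conjc (a 0 1) + a 0 2%:R * conjc (a 0 2%:R))
        * (b 0 1 * conjc (b 0 1) + b 0 2%:R * conjc (b 0 2%:R))
      - (a 0 1 * conjc (b 0 1) + a 0 2%:R * conjc (b 0 2%:R))
        * conjc (a 0 1 * conjc (b 0 1) + a 0 2%:R * conjc (b 0 2%:R)).
    by rewrite /t; conjc_simpl; ring.
  by rewrite -Ea -Eb -Eab; conjc_simpl; ring.
have cb0 : conjc (b 0 0) != 0 by rewrite conjc_eq0.
have e1 : a 0 0 * b 0 1 = a 0 1 * b 0 0.
  apply/eqP; rewrite -subr_eq0 -(mulIr_eq0 _ (mulIf cb0)).
  have -> : (a 0 0 * b 0 1 - a 0 1 * b 0 0) * conjc (b 0 0) =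
      a 0 0 * conjc (b 0 0) * b 0 1 - a 0 1 * (b 0 0 * conjc (b 0 0)) by ring.
  by rewrite Eab Eb -(mulr0 (- conjc (b 0 2%:R))) -t0 /t; apply/eqP; ring.
have e2 : a 0 0 * b 0 2%:R = a 0 2%:R * b 0 0.
  apply/eqP; rewrite -subr_eq0 -(mulIr_eq0 _ (mulIf cb0)).
  have -> : (a 0 0 * b 0 2%:R - a 0 2%:R * b 0 0) * conjc (b 0 0) =
      a 0 0 * conjc (b 0 0) * b 0 2%:R - a 0 2%:R * (b 0 0 * conjc (b 0 0)) by ring.
  by rewrite Eab Eb -(mulr0 (conjc (b 0 1))) -t0 /t; apply/eqP; ring.
exists (b 0 0 / a 0 0); split; first by rewrite mulf_neq0 ?invr_eq0.
apply: vec_ext; rewrite mxE mulrAC.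
- by rewrite mulfK.
- by rewrite (mulrC (b 0 0)) -e1 (mulrC (a 0 0)) mulfK.
- by rewrite (mulrC (b 0 0)) -e2 (mulrC (a 0 0)) mulfK.
Qed.

End NullVectors.

Section Distances.
Variable R : realType.
Local Notation C := R[i].
Local Notation V := (vec R).
Local Notation normc := (@Normc.normc R).

Lemma sqr_wedge_norm (u v : V) :
  wedge_norm u v ^+ 2 = enorm u ^+ 2 * enorm v ^+ 2 - normc (hdot u v) ^+ 2.
Proof.
rewrite /wedge_norm sqr_sqrtr // subr_ge0 -exprMn.
by rewrite ler_sqr ?nnegrE ?normc_ge0 ?mulr_ge0 ?enorm_ge0 ?normc_hdot_le.
Qed.

Lemma wedge_normC (u v : V) : wedge_norm u v = wedge_norm v u.
Proof. by rewrite /wedge_norm (hdot_conj u v) normc_conjc mulrC. Qed.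

Lemma dEC (u v : V) : dE u v = dE v u.
Proof. by rewrite /dE wedge_normC (mulrC (enorm u)). Qed.

Lemma dE_ge0 (u v : V) : 0 <= dE u v.
Proof. by rewrite /dE divr_ge0 ?sqrtr_ge0 ?mulr_ge0 ?enorm_ge0. Qed.

Definition dvis2 (u v : V) : R := normc (herm u v) / (enorm u * enorm v).

Lemma dvis2C (u v : V) : dvis2 u v = dvis2 v u.
Proof. by rewrite /dvis2 (herm_conj u v) normc_conjc (mulrC (enorm u)). Qed.

Lemma dvis2_ge0 (u v : V) : 0 <= dvis2 u v.
Proof. by rewrite /dvis2 divr_ge0 ?normc_ge0 ?mulr_ge0 ?enorm_ge0. Qed.

Lemma dvis2_le1 (u v : V) : dvis2 u v <= 1.
Proof.
have [uv0|uv0] := eqVneq (enorm u * enorm v) 0; first by rewrite /dvis2 uv0 invr0 mulr0.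
rewrite /dvis2 ler_pdivrMr ?mul1r ?normc_herm_le //.
by rewrite lt_def uv0 mulr_ge0 ?enorm_ge0.
Qed.

Lemma sqr_dvis (u v : V) : dvis u v ^+ 2 = dvis2 u v.
Proof. exact/sqr_sqrtr/dvis2_ge0. Qed.

Lemma sqr_wedge_norm_addZ (p x : V) (al ga : C) :
  wedge_norm p (al *: x + ga *: p) ^+ 2 = normc al ^+ 2 * wedge_norm p x ^+ 2.
Proof.
set w := al *: x + ga *: p.
have e : hdot p p * hdot w w - hdot p w * conjc (hdot p w) =
    al * conjc al * (hdot p p * hdot x x - hdot p x * conjc (hdot p x)).
  by rewrite /w !hdotE !mxE; conjc_simpl; ring.
move: e; rewrite !hdot_self !mulcJ_normc -!realcM -!realcB -realcM => /realc_inj e.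
by rewrite !sqr_wedge_norm.
Qed.

Lemma sqr_wedge_norm_null_perp (p x : V) : herm x x = 0 -> herm p x = 0 ->
  wedge_norm p x ^+ 2 = enorm x ^+ 2 * - q p.
Proof.
move=> xx px.
have e : hdot p p * hdot x x - hdot p x * conjc (hdot p x) + hdot x x * herm p p =
    (p 0 0 * conjc (x 0 0) * conjc (herm p x) + x 0 0 * conjc (p 0 0) * herm p x) *+ 2
    - (p 0 0 * conjc (p 0 0) * herm x x) *+ 2 - herm p x * conjc (herm p x).
  by rewrite !hdotE /herm; conjc_simpl; ring.
rewrite xx px conjc0 ?(mulr0, mul0r, addr0, subr0, mul0rn, oppr0) in e.
move/eqP: e; rewrite addr_eq0 !hdot_self mulcJ_normc -!realcM -realcB => /eqP.
rewrite sqr_wedge_norm /q; case: (herm p p) => a b [-> _] /=.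
by rewrite mul0r subr0 mulrN.
Qed.

(* [c *: u'] is the [hdot]-orthogonal projection of [u] on the line of [u']. *)
Lemma hdot_proj_remainder (u u' : V) : u' != 0 -> exists c : C,
  normc c * enorm u' <= enorm u /\ enorm (u - c *: u') * enorm u' = wedge_norm u u'.
Proof.
move=> u'0; have eu' := enorm_gt0 u'0.
set h := hdot u u'; set E : C := (enorm u' ^+ 2)%:C%C.
have E0 : E != 0.
  by rewrite /E -[0]/((0 : R)%:C%C); apply/eqP => /realc_inj/eqP; rewrite sqrf_eq0 gt_eqF.
exists (h / E); split.
  rewrite Normc.normcM Normc.normcV normc_real ger0_norm ?sqr_ge0 //.
  rewrite -mulrA (_ : (enorm u' ^+ 2)^-1 * enorm u' = (enorm u')^-1).
    by rewrite ler_pdivrMr // normc_hdot_le.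
  by field; rewrite gt_eqF.
set r := u - h / E *: u'.
have rr_E : hdot r r * E = hdot u u * E - h * conjc h.
  rewrite /r hdotBl !hdotBr !hdotZl !hdotZr (hdot_conj u u') -/h !hdot_self -/E.
  rewrite conjcM conjc_inv conjc_real -/E.
  by move: E0; clearbody E h => E0; field.
have : (enorm r * enorm u') ^+ 2 = wedge_norm u u' ^+ 2.
  move: rr_E; rewrite !hdot_self mulcJ_normc /E -!realcM -realcB => /realc_inj.
  by rewrite exprMn sqr_wedge_norm => ->.
by move/eqP; rewrite eqrXn2 ?mulr_ge0 ?enorm_ge0 ?sqrtr_ge0 // => /eqP.
Qed.

Lemma dvis2_lipschitz (u u' v : V) : u != 0 -> u' != 0 -> v != 0 ->
  dvis2 u v <= dvis2 u' v + dE u u'.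
Proof.
move=> u0 u'0 v0.
have eu := enorm_gt0 u0; have eu' := enorm_gt0 u'0; have ev := enorm_gt0 v0.
have [c [c_le r_wedge]] := hdot_proj_remainder u u'0; set r := u - c *: u' in r_wedge.
have uv_le : normc (herm u v) <= normc c * normc (herm u' v) + enorm r * enorm v.
  have -> : herm u v = c * herm u' v + herm r v by rewrite /r hermBl hermZl addrC subrK.
  apply: le_trans (le_normcD _ _) _.
  by rewrite Normc.normcM lerD2l normc_herm_le.
rewrite /dvis2 /dE.
have -> : normc (herm u v) / (enorm u * enorm v) =
  normc (herm u v) * enorm u' / (enorm u * enorm u' * enorm v).
  by field; rewrite !gt_eqF.
have -> : normc (herm u' v) / (enorm u' * enorm v) + wedge_norm u u' / (enorm u * enorm u') =
  (normc (herm u' v) * enorm u + wedge_norm u u' * enorm v) / (enorm u * enorm u' * enorm v).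
  by field; rewrite !gt_eqF.
rewrite ler_pM2r ?invr_gt0 ?mulr_gt0 // -r_wedge.
have := normc_ge0 (herm u' v); have := normc_ge0 c; have := enorm_ge0 r; nra.
Qed.

End Distances.

Section Separation.
Variable R : realType.
Local Notation V := (vec R).

Lemma dE_cvg_lt (f : nat -> V) (a : V) : dE (f n) a @[n --> \oo] --> (0 : R) ->
  forall e, 0 < e -> exists N, forall n, (N <= n)%N -> dE (f n) a < e.
Proof.
move=> /cvgr_dist_lt fa e e0; have [N _ HN] := fa e e0.
by exists N => n Nn; have := HN n Nn; rewrite sub0r normrN ger0_norm ?dE_ge0.
Qed.

Lemma incr_geq_id (phi : nat -> nat) :
  (forall n, (phi n < phi n.+1)%N) -> forall n, (n <= phi n)%N.
Proof. by move=> phiS; elim=> // n IH; apply: leq_ltn_trans IH (phiS n). Qed.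

Lemma pcompact_cluster2 (K1 K2 : set V) (xs ys : nat -> V) :
  pcompact K1 -> pcompact K2 -> (forall n, K1 (xs n)) -> (forall n, K2 (ys n)) ->
  exists a b, [/\ K1 a, K2 b & forall e, 0 < e -> forall N,
    exists2 k, (N <= k)%N & dE (xs k) a < e /\ dE (ys k) b < e].
Proof.
move=> cK1 cK2 Kxs Kys.
have [phi [a [phiS [Ka xa]]]] := cK1 xs Kxs.
have [psi [b [psiS [Kb yb]]]] := cK2 (ys \o phi) (fun n => Kys (phi n)).
exists a, b; split=> // e e0 N.
have [N1 HN1] := dE_cvg_lt xa e0; have [N2 HN2] := dE_cvg_lt yb e0.
set m := maxn N (maxn N1 N2).
have [Nm N1m N2m] : [/\ N <= m, N1 <= m & N2 <= m]%N by rewrite !leq_max !leqnn !orbT.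
have m_psi : (m <= psi m)%N := incr_geq_id psiS m.
have psi_phi : (psi m <= phi (psi m))%N := incr_geq_id phiS (psi m).
exists (phi (psi m)); first exact: leq_trans Nm (leq_trans m_psi psi_phi).
split; first exact: HN1 (leq_trans N1m m_psi).
exact: HN2.
Qed.

Lemma dvis2_bounded_below (K1 K2 : set V) :
  K1 `<=` S3 (R:=R) -> K2 `<=` S3 (R:=R) -> pcompact K1 -> pcompact K2 ->
  (forall u v, K1 u -> K2 v -> ~ proj_eq u v) ->
  exists2 d : R, 0 < d & forall x y, K1 x -> K2 y -> d <= dvis2 x y.
Proof.
move=> S1 S2 cK1 cK2 disj.
apply: contrapT => no_bound.
have small n : exists xy : V * V, [/\ K1 xy.1, K2 xy.2 & dvis2 xy.1 xy.2 < n.+1%:R^-1].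
  apply: contrapT => no_xy; apply: no_bound; exists n.+1%:R^-1; first by rewrite invr_gt0.
  by move=> x y Kx Ky; rewrite leNgt; apply/negP => xy; apply: no_xy; exists (x, y).
have [xys Hxys] := choice small.
pose xs n := (xys n).1; pose ys n := (xys n).2.
have Kxs n : K1 (xs n) by case: (Hxys n).
have Kys n : K2 (ys n) by case: (Hxys n).
have [a [b [Ka Kb close]]] := pcompact_cluster2 cK1 cK2 Kxs Kys.
have nz1 u : K1 u -> u != 0 by move=> /S1 [].
have nz2 u : K2 u -> u != 0 by move=> /S2 [].
have ab0 : dvis2 a b <= 0.
  rewrite leNgt; apply/negP => ab_gt0; pose e := dvis2 a b / 3%:R.
  have e0 : 0 < e by rewrite divr_gt0.
  have [N] := ltr_add_invr e0; rewrite add0r => Ne.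
  have [k Nk [xa yb]] := close e e0 N.
  have xy_e : dvis2 (xs k) (ys k) < e.
    have [_ _ xy] := Hxys k.
    apply: lt_le_trans xy (le_trans _ (ltW Ne)).
    by rewrite lef_pV2 ?posrE ?ltr0n // ler_nat ltnS.
  have l1 := dvis2_lipschitz (nz1 _ Ka) (nz1 _ (Kxs k)) (nz2 _ Kb).
  have l2 := dvis2_lipschitz (nz2 _ Kb) (nz2 _ (Kys k)) (nz1 _ (Kxs k)).
  rewrite dEC in l1; rewrite dEC (dvis2C b) (dvis2C (ys k)) in l2.
  have : dvis2 a b = e * 3%:R by rewrite /e mulfVK ?pnatr_eq0.
  lra.
apply: (disj a b Ka Kb); apply: S3_perp_proj_eq (S1 _ Ka) (S2 _ Kb) _.
apply: Normc.eq0_normc; apply/eqP; rewrite eq_le normc_ge0 andbT.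
move: ab0; rewrite /dvis2 pmulr_lle0 // invr_gt0 mulr_gt0 //.
- exact: enorm_gt0 (nz1 _ Ka).
- exact: enorm_gt0 (nz2 _ Kb).
Qed.

End Separation.

Section RealInequalities.
Variable R : realFieldType.

Lemma le_scale_of_sqr (K s t : R) :
  1 <= K -> 0 <= s -> 0 <= t -> s ^+ 2 <= K * t ^+ 2 -> s <= K * t.
Proof.
move=> K1 s0 t0 st; rewrite -ler_sqr ?nnegrE ?mulr_ge0 //; last lra.
apply: le_trans st _; rewrite exprMn ler_wpM2r ?sqr_ge0 //; nra.
Qed.

Lemma sqr_ratio_comparable (E T u v W N P : R) :
  1 <= E -> 0 < P -> 0 < W -> 0 <= u -> 0 <= v -> 0 <= T ->
  T * P ^+ 2 * W ^+ 2 = u ^+ 2 * N -> N <= P ^+ 2 -> P ^+ 2 <= E ^+ 2 * N ->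
  u <= E * W -> v <= E ^+ 2 * W -> W <= u + v ->
  u ^+ 2 <= E ^+ 2 * (u + v) ^+ 2 * T /\ T * (u + v) ^+ 2 <= 4 * E ^+ 4 * u ^+ 2.
Proof.
move=> E1 P0 W0 u0 v0 T0 TPW NP PN uW vW Wuv.
have P2 : 0 < P ^+ 2 by rewrite exprn_gt0.
have EE : E <= E ^+ 2 by rewrite expr2 ler_peMl //; lra.
have WW : W ^+ 2 <= (u + v) ^+ 2 by rewrite ler_sqr ?nnegrE ?addr_ge0 //; lra.
have TW : T * W ^+ 2 <= u ^+ 2.
  rewrite -(ler_pM2r P2).
  have := ler_wpM2l (sqr_ge0 u) NP; nra.
split.
- rewrite -(ler_pM2r P2).
  have := ler_wpM2l (sqr_ge0 u) PN.
  have := ler_wpM2l (mulr_ge0 (sqr_ge0 E) (mulr_ge0 T0 (ltW P2))) WW; nra.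
- have uv : u + v <= 2 * E ^+ 2 * W by nra.
  have uv2 : (u + v) ^+ 2 <= (2 * E ^+ 2 * W) ^+ 2.
    by rewrite ler_sqr ?nnegrE ?addr_ge0 //; nra.
  have E0 : 0 <= E by lra.
  have := ler_wpM2l T0 uv2; have := ler_wpM2l (exprn_ge0 4 E0) TW.
  nra.
Qed.

Lemma chain_coeff_bound (E r m n u v Z : R) :
  1 <= E -> 0 <= r -> 0 <= m -> 0 <= n -> 0 <= u -> 0 <= v ->
  m * u <= E * n * v -> n ^+ 2 <= 2 * E ^+ 2 * r * m -> Z <= r + m + n ->
  u ^+ 2 * Z <= 2 * E ^+ 4 * r * (u + v) ^+ 2.
Proof.
move=> E1 r0 m0 n0 u0 v0 mu nrm Zrmn.
have E0 : 0 <= E by lra.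
have nu : n * u <= 2 * E ^+ 3 * r * v.
  have [->|n_gt0] := eqVneq n 0; first by rewrite mul0r !mulr_ge0 ?exprn_ge0.
  have n_pos : 0 < n by rewrite lt_def n_gt0.
  rewrite -(ler_pM2l n_pos).
  have := ler_wpM2l (mulr_ge0 (mulr_ge0 (sqr_ge0 E) r0) (ler0n _ 2)) mu.
  have := ler_wpM2r u0 nrm; nra.
have mu2 : m * u ^+ 2 <= 2 * E ^+ 4 * r * v ^+ 2.
  have := ler_wpM2r u0 mu; have := ler_wpM2l (mulr_ge0 E0 v0) nu; nra.
have E14 : 1 <= E ^+ 4 by rewrite expr_ge1.
have E34 : E ^+ 3 <= E ^+ 4 by rewrite [E ^+ 4]exprSr ler_peMr ?exprn_ge0.
have := ler_wpM2l (sqr_ge0 u) Zrmn; have := ler_wpM2l u0 nu.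
have := ler_wpM2r (mulr_ge0 r0 (sqr_ge0 u)) E14.
have := ler_wpM2r (mulr_ge0 (mulr_ge0 r0 u0) v0) E34.
nra.
Qed.

Lemma mul_le_of_ratio_bounds (a b T Z r u v : R) :
  0 <= a -> 0 <= b -> 0 <= r -> 0 <= T -> 0 < u + v ->
  T * (u + v) ^+ 2 <= a * u ^+ 2 -> u ^+ 2 * Z <= b * r * (u + v) ^+ 2 ->
  T * Z <= a * b * r.
Proof.
move=> a0 b0 r0 T0 uv0 Tuv uZ.
have uv2 : 0 < (u + v) ^+ 2 by rewrite exprn_gt0.
have [u0|u_neq0] := eqVneq u 0.
  have -> : T = 0 by move: Tuv uv2; rewrite u0 expr0n mulr0 => ? ?; nra.
  by rewrite mul0r !mulr_ge0.
have u2 : 0 < u ^+ 2 by rewrite lt_def sqrf_eq0 u_neq0 sqr_ge0.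
rewrite -(ler_pM2l u2).
have := ler_wpM2l T0 uZ; have := ler_wpM2l (mulr_ge0 b0 r0) Tuv; nra.
Qed.

End RealInequalities.

Section Configuration.
Variable R : realType.
Local Notation C := R[i].
Local Notation V := (vec R).
Local Notation normc := (@Normc.normc R).

Variables (E : R) (x y w p : V).
Hypotheses (E_ge1 : 1 <= E) (Sx : S3 x) (Sy : S3 y)
  (xy_E : enorm x * enorm y <= E * normc (herm x y))
  (w_LC : LC w) (xw : herm x w = 0) (p_pi : is_pi x y p).

Let a := herm x y.
Let X := enorm x.
Let Y := enorm y.
Let A := normc a.
Let P := enorm p.
Let N := - q p.

Let xx : herm x x = 0. Proof. by case: Sx. Qed.
Let yy : herm y y = 0. Proof. by case: Sy. Qed.
Let px : herm p x = 0. Proof. by case: p_pi => _ []. Qed.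
Let py : herm p y = 0. Proof. by case: p_pi => _ []. Qed.
Let xp : herm x p = 0. Proof. by rewrite herm_conj px conjc0. Qed.
Let yp : herm y p = 0. Proof. by rewrite herm_conj py conjc0. Qed.
Let yx : herm y x = conjc a. Proof. exact: herm_conj. Qed.
Let wx : herm w x = 0. Proof. by rewrite herm_conj xw conjc0. Qed.

Let X_gt0 : 0 < X. Proof. by apply: enorm_gt0; case: Sx. Qed.
Let Y_gt0 : 0 < Y. Proof. by apply: enorm_gt0; case: Sy. Qed.
Let P_gt0 : 0 < P. Proof. by apply: enorm_gt0; case: p_pi. Qed.
Let E_gt0 : 0 < E. Proof. exact: lt_le_trans ltr01 E_ge1. Qed.

Let A_gt0 : 0 < A.
Proof. by rewrite -(pmulr_rgt0 _ E_gt0); apply: lt_le_trans xy_E; rewrite mulr_gt0. Qed.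

Let a_neq0 : a != 0.
Proof. by apply/eqP => a0; move: A_gt0; rewrite /A a0 Normc.normc0 ltxx. Qed.

Lemma pi_hcross : exists2 c, c != 0 & p = c *: hcross x y.
Proof.
have QQ : herm (hcross x y) (hcross x y) = - (a * conjc a).
  by rewrite herm_hcross_self xx yy yx mul0r sub0r.
have Q0 : hcross x y != 0.
  apply/eqP => Q0; move: QQ; rewrite Q0 herm0l => /eqP.
  by rewrite eq_sym oppr_eq0 mulf_eq0 conjc_eq0 orbb (negbTE a_neq0).
have [c pc] := herm_perp2_hcross px py Q0.
exists c => //; apply/eqP => c0; case: p_pi => /eqP[].
by rewrite pc c0 scale0r.
Qed.
Lemma pi_colinear (r : V) : herm r x = 0 -> herm r y = 0 -> exists c, r = c *: p.
Proof.
move=> rx ry; have [c c0 pc] := pi_hcross.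
have Q0 : hcross x y != 0 by apply: contraNneq p_pi.1 => Q0; rewrite pc Q0 scaler0.
have [d ->] := herm_perp2_hcross rx ry Q0.
by exists (d / c); rewrite pc scalerA divfK.
Qed.

Lemma herm_pi_self : herm p p = (- N)%:C%C /\ 0 < N.
Proof.
have [c c0 pc] := pi_hcross.
have hpp : herm p p = (- (normc c ^+ 2 * A ^+ 2))%:C%C.
  rewrite pc hermZl hermZr herm_hcross_self xx yy yx -/a mul0r sub0r !mulrN mulrA.
  by rewrite !mulcJ_normc -realcM realcN.
by rewrite /N /q hpp /= !opprK; split=> //; rewrite mulr_gt0 ?exprn_gt0 ?normc_gt0.
Qed.

Let pp : herm p p = (- N)%:C%C. Proof. by case: herm_pi_self. Qed.
Let N_gt0 : 0 < N. Proof. by case: herm_pi_self. Qed.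
Let pp_neq0 : herm p p != 0.
Proof. by rewrite pp; apply/eqP => -[] /eqP; rewrite oppr_eq0 gt_eqF. Qed.

Lemma pi_norm_bounds : N <= P ^+ 2 /\ P ^+ 2 <= E ^+ 2 * N.
Proof.
split.
  by have := normc_herm_le p p; rewrite pp normc_real normrN ger0_norm ?(ltW N_gt0).
have [c c0 pc] := pi_hcross.
have N_c : N = normc c ^+ 2 * A ^+ 2.
  move: pp; rewrite pc hermZl hermZr herm_hcross_self xx yy yx -/a mul0r sub0r.
  by rewrite !mulrN mulrA !mulcJ_normc -realcM realcN => /oppr_inj /realc_inj.
have Q_XY : enorm (hcross x y) ^+ 2 <= X ^+ 2 * Y ^+ 2.
  have := hdot_hcross_self x y.
  rewrite !hdot_self mulcJ_normc -realcD -realcM => /realc_inj <-.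
  by rewrite lerDl sqr_ge0.
have XY_A : X ^+ 2 * Y ^+ 2 <= E ^+ 2 * A ^+ 2.
  by rewrite -!exprMn ler_sqr ?nnegrE ?mulr_ge0 ?normc_ge0 //; exact: ltW.
have -> : P ^+ 2 = normc c ^+ 2 * enorm (hcross x y) ^+ 2 by rewrite /P pc enormZ exprMn.
rewrite N_c (mulrCA (E ^+ 2)); apply: ler_wpM2l; [exact: sqr_ge0 | exact: le_trans Q_XY XY_A].
Qed.

Lemma w_decomp : exists alpha gamma, w = alpha *: x + gamma *: p /\ gamma != 0.
Proof.
have [gamma wE] : exists gamma, w - (herm w y / a) *: x = gamma *: p.
  apply: pi_colinear; rewrite hermBl hermZl ?xx ?wx ?mulr0 ?subr0 //.
  by rewrite -/a divfK ?subrr.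
exists (herm w y / a), gamma; move/eqP: wE; rewrite subr_eq addrC => /eqP wE.
split=> //; apply: contraTneq w_LC => g0.
by rewrite /LC /q wE g0 scale0r addr0 hermZl hermZr xx !mulr0 ltxx.
Qed.

Let W := enorm w.
Let T := dE p w ^+ 2.

Let W_gt0 : 0 < W.
Proof. by apply: enorm_gt0; apply: contraTneq w_LC => ->; rewrite /LC /q herm0l ltxx. Qed.

Section Coefficients.
Variables (alpha gamma : C).
Hypotheses (wE : w = alpha *: x + gamma *: p) (gamma_neq0 : gamma != 0).

Let u := normc alpha * X.
Let v := normc gamma * P.
Let u_ge0 : 0 <= u. Proof. by rewrite mulr_ge0 ?normc_ge0 //; exact: ltW. Qed.
Let v_gt0 : 0 < v. Proof. by rewrite mulr_gt0 ?normc_gt0. Qed.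

Lemma sqr_dE_pi_w : T * P ^+ 2 * W ^+ 2 = u ^+ 2 * N.
Proof.
have wedge : wedge_norm p w ^+ 2 = u ^+ 2 * N.
  by rewrite {1}wE sqr_wedge_norm_addZ sqr_wedge_norm_null_perp // exprMn mulrA.
rewrite /T /dE -wedge -/P -/W.
by field; rewrite ?mulf_neq0 ?gt_eqF.
Qed.

Lemma w_norm_bounds : [/\ u <= E * W, v <= E ^+ 2 * W & W <= u + v].
Proof.
have [NP PN] := pi_norm_bounds.
split.
- have wy : normc alpha * A <= W * Y.
    have wy_alpha : herm w y = alpha * a.
      by rewrite wE hermDl !hermZl py mulr0 addr0.
    by rewrite -Normc.normcM -wy_alpha normc_herm_le.
  rewrite -(ler_pM2r Y_gt0) /u.
  have := ler_wpM2l (normc_ge0 alpha) xy_E; have := ler_wpM2l (ltW E_gt0) wy.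
  rewrite -/X -/Y -/A; nra.
- have wp : normc gamma * N <= W * P.
    have wp_gamma : herm w p = gamma * herm p p.
      by rewrite wE hermDl !hermZl xp mulr0 add0r.
    rewrite -(ger0_norm (ltW N_gt0)) -normrN -normc_real -pp -Normc.normcM -wp_gamma.
    exact: normc_herm_le.
  rewrite -(ler_pM2r P_gt0) /v.
  have := ler_wpM2l (normc_ge0 gamma) PN; have := ler_wpM2l (sqr_ge0 E) wp; nra.
- by rewrite /W {1}wE; apply: le_trans (enormD _ _) _; rewrite !enormZ.
Qed.

Lemma dE_pi_w_bounds :
  u ^+ 2 <= E ^+ 2 * (u + v) ^+ 2 * T /\ T * (u + v) ^+ 2 <= 4 * E ^+ 4 * u ^+ 2.
Proof.
have [NP PN] := pi_norm_bounds; have [uW vW Wuv] := w_norm_bounds.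
exact: sqr_ratio_comparable E_ge1 P_gt0 W_gt0 u_ge0 (ltW v_gt0) (sqr_ge0 _) sqr_dE_pi_w
  NP PN uW vW Wuv.
Qed.

Lemma chain_coords (z : V) : chain w z -> exists la mu nu : C,
  [/\ z = nu *: p + mu *: y + la *: x,
      normc mu * normc alpha * A = normc nu * normc gamma * N,
      normc nu ^+ 2 * N <= 2 * normc la * normc mu * A &
      normc (herm y z) = normc la * A].
Proof.
case=> -[_ zz] zw.
have [la zy] : exists la, herm z y = la * a by exists (herm z y / a); rewrite divfK.
have [mu zx] : exists mu, herm z x = mu * conjc a.
  by exists (herm z x / conjc a); rewrite divfK ?conjc_eq0.
have [nu] : exists nu, z - la *: x - mu *: y = nu *: p.
  by apply: pi_colinear; rewrite !hermBl !hermZl ?xx ?yx ?yy ?zx ?zy ?mulr0 ?subr0 ?subrr.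
move/eqP; rewrite !subr_eq => /eqP zE.
exists la, mu, nu; split => //.
- have : mu * conjc alpha * conjc a = - (nu * conjc gamma * herm p p).
    apply/eqP; rewrite -addr_eq0 -zw zE wE.
    by rewrite !(hermDl, hermDr, hermZl, hermZr) xx xp yx yp px pp -/a; apply/eqP; ring.
  move/(congr1 normc); rewrite normcN !Normc.normcM !normc_conjc pp normc_real normrN.
  by rewrite ger0_norm ?(ltW N_gt0).
- have : herm z z = la * conjc mu * a + conjc (la * conjc mu * a) - (normc nu ^+ 2 * N)%:C%C.
    rewrite zE !(hermDl, hermDr, hermZl, hermZr) xx xp yx yp px py yy pp -/a.
    by rewrite realcM -mulcJ_normc realcN; conjc_simpl; ring.
  rewrite zz => /eqP; rewrite eq_sym subr_eq0 addcJ_real => /eqP /realc_inj <-.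
  have := Re_le_normc (la * conjc mu * a).
  by rewrite !Normc.normcM normc_conjc -/A; lra.
- by rewrite zE !(hermDr, hermZr) yp yy herm_conj -/a !mulr0 addr0 add0r Normc.normcM
    !normc_conjc.
Qed.

Lemma sqr_dE_le_dvis2 (z : V) : chain w z -> T <= 8 * E ^+ 9 * dvis2 y z.
Proof.
move=> zL; have [[z0 _] _] := zL.
have [la [mu [nu [zE e1 e2 yz]]]] := chain_coords zL.
have [NP PN] := pi_norm_bounds; have [_ T_uv] := dE_pi_w_bounds.
have A_XY : A <= X * Y := normc_herm_le x y.
set r := normc la * X; set m := normc mu * Y; set n := normc nu * P; set Z := enorm z.
have la0 := normc_ge0 la; have mu0 := normc_ge0 mu; have nu0 := normc_ge0 nu.
have al0 := normc_ge0 alpha; have ga0 := normc_ge0 gamma.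
have mu_le : m * u <= E * n * v.
  have := ler_wpM2l (mulr_ge0 mu0 al0) xy_E.
  have := ler_wpM2l (mulr_ge0 (ltW E_gt0) (mulr_ge0 nu0 ga0)) NP.
  have := congr1 (fun t => E * t) e1.
  rewrite /m /u /n /v -/X -/Y -/a -/A; nra.
have n_le : n ^+ 2 <= 2 * E ^+ 2 * r * m.
  have := ler_wpM2l (sqr_ge0 (normc nu)) PN.
  have := ler_wpM2l (mulr_ge0 (sqr_ge0 E) (mulr_ge0 la0 mu0)) A_XY.
  rewrite /r /m /n -/X -/Y; nra.
have Z_le : Z <= r + m + n.
  rewrite /Z zE; apply: le_trans (enormD _ _) _; rewrite enormZ.
  have := enormD (nu *: p) (mu *: y); rewrite !enormZ -/P -/X -/Y /r /m /n; lra.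
have uZ := chain_coeff_bound E_ge1 (mulr_ge0 la0 (ltW X_gt0)) (mulr_ge0 mu0 (ltW Y_gt0))
  (mulr_ge0 nu0 (ltW P_gt0)) u_ge0 (ltW v_gt0) mu_le n_le Z_le.
have TZ := mul_le_of_ratio_bounds (mulr_ge0 (ler0n _ 4) (exprn_ge0 4 (ltW E_gt0)))
  (mulr_ge0 (ler0n _ 2) (exprn_ge0 4 (ltW E_gt0))) (mulr_ge0 la0 (ltW X_gt0))
  (sqr_ge0 _) (ltr_wpDl u_ge0 v_gt0) T_uv uZ.
have Z_gt0 : 0 < Z := enorm_gt0 z0.
rewrite /dvis2 yz -/Y -/Z mulrA ler_pdivlMr ?mulr_gt0 //.
have := ler_wpM2l (mulr_ge0 (mulr_ge0 (ler0n _ 8) (exprn_ge0 8 (ltW E_gt0))) la0) xy_E.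
have := ler_wpM2r (ltW Y_gt0) TZ.
rewrite /r -/X -/Y -/a -/A -/T; nra.
Qed.

Lemma chain_point_through_y : exists2 z, chain w z & 2 * v ^+ 2 * dvis2 y z <= E ^+ 2 * u ^+ 2.
Proof.
have cg_pp : conjc gamma * herm p p != 0 by rewrite mulf_neq0 ?conjc_eq0.
have [nu nu_eq] : exists nu, nu * (conjc gamma * herm p p) = - (conjc alpha * conjc a).
  by exists (- (conjc alpha * conjc a) / (conjc gamma * herm p p)); rewrite divfK.
have [la la_eq] : exists la, la * a = (normc nu ^+ 2 * N / 2)%:C%C.
  by exists ((normc nu ^+ 2 * N / 2)%:C%C / a); rewrite divfK.
pose z := la *: x + y + nu *: p.
have zx : herm z x = conjc a by rewrite !hermDl !hermZl xx yx px !mulr0 addr0 add0r.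
have zp : herm z p = nu * herm p p by rewrite !hermDl !hermZl xp yp !mulr0 !add0r.
have yz : herm y z = conjc (la * a).
  by rewrite !(hermDr, hermZr) yx yy yp !mulr0 !addr0 conjcM.
exists z.
  split; [split|].
  - by apply: contra_eq_neq zx => ->; rewrite herm0l eq_sym conjc_eq0.
  - rewrite hermDl hermZl hermDl hermZl (herm_conj z x) (herm_conj z p) zx zp yz conjcK.
    rewrite la_eq conjc_real conjcM pp conjc_real mulrA mulcJ_normc -!realcM -!realcD.
    have -> : normc nu ^+ 2 * N / 2 + normc nu ^+ 2 * N / 2 + normc nu ^+ 2 * - N = 0.
      by field.
    by [].
  - rewrite wE !(hermDr, hermZr) zx zp mulrA (mulrC (conjc gamma)) -mulrA nu_eq.
    by rewrite mulrC subrr.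
have [NP PN] := pi_norm_bounds.
have z_neq0 : z != 0 by apply: contra_eq_neq zx => ->; rewrite herm0l eq_sym conjc_eq0.
set Z := enorm z; have Z_gt0 : 0 < Z := enorm_gt0 z_neq0.
have A_XZ : A <= Z * X by rewrite /A -normc_conjc -zx normc_herm_le.
have A_XY : A <= X * Y := normc_herm_le x y.
have k_eq : normc nu * normc gamma * N = normc alpha * A.
  move/(congr1 normc): nu_eq; rewrite normcN !Normc.normcM !normc_conjc pp normc_real.
  by rewrite normrN ger0_norm ?(ltW N_gt0) // mulrA -/A.
have M_ge0 : 0 <= normc nu ^+ 2 * N / 2.
  by rewrite divr_ge0 // mulr_ge0 ?sqr_ge0 //; exact: ltW.
rewrite /dvis2 yz normc_conjc la_eq normc_real ger0_norm // -/Y -/Z.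
rewrite mulrA ler_pdivrMr ?mulr_gt0 //.
have al0 := normc_ge0 alpha; have A0 := ltW A_gt0.
have := ler_wpM2l
  (mulr_ge0 (mulr_ge0 (sqr_ge0 (normc gamma)) (sqr_ge0 (normc nu))) (ltW N_gt0)) PN.
have := congr1 (fun t => t ^+ 2) k_eq.
have := ler_wpM2l (mulr_ge0 (mulr_ge0 (sqr_ge0 E) (sqr_ge0 (normc alpha))) A0) A_XZ.
have := ler_wpM2l (mulr_ge0 (mulr_ge0 (mulr_ge0 (sqr_ge0 E) (sqr_ge0 (normc alpha)))
  (ltW X_gt0)) (ltW Z_gt0)) A_XY.
rewrite /u /v; nra.
Qed.

Lemma exists_chain_dvis2_le : exists2 z, chain w z & dvis2 y z <= 8 * E ^+ 9 * T.
Proof.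
have [u_lo _] := dE_pi_w_bounds.
have E29 : E ^+ 2 <= E ^+ 9 by apply: ler_weXn2l.
have E49 : E ^+ 4 <= E ^+ 9 by apply: ler_weXn2l.
have T0 : 0 <= T := sqr_ge0 _.
have [vu|uv] := leP v u.
- exists x; first by split.
  apply: le_trans (dvis2_le1 y x) _.
  have u_gt0 : 0 < u := lt_le_trans v_gt0 vu.
  have uv2 : (u + v) ^+ 2 <= (2 * u) ^+ 2.
    by rewrite ler_sqr ?nnegrE; have := u_ge0; have := v_gt0; lra.
  have T_lo : 1 <= 4 * E ^+ 2 * T.
    rewrite -(ler_pM2l (exprn_gt0 2 u_gt0)) mulr1.
    have := ler_wpM2l (mulr_ge0 (sqr_ge0 E) T0) uv2; nra.
  have := ler_wpM2r T0 E29; nra.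
- have [z zL zb] := chain_point_through_y; exists z => //.
  have uv2 : (u + v) ^+ 2 <= (2 * v) ^+ 2.
    by rewrite ler_sqr ?nnegrE; have := u_ge0; have := v_gt0; lra.
  have v2 : 0 < 2 * v ^+ 2 by rewrite mulr_gt0 ?exprn_gt0.
  have : dvis2 y z <= 2 * E ^+ 4 * T.
    rewrite -(ler_pM2l v2).
    have := ler_wpM2l (mulr_ge0 (sqr_ge0 E) (mulr_ge0 (sqr_ge0 E) T0)) uv2; nra.
  have := ler_wpM2r T0 E49; nra.
Qed.

End Coefficients.

Lemma dist_chain_comparable :
  (8 * E ^+ 9)^-1 * dist_chain y w <= dE p w /\ dE p w <= 8 * E ^+ 9 * dist_chain y w.
Proof.
set K := 8 * E ^+ 9.
have K1 : 1 <= K.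
  have : 1 <= E ^+ 9 by rewrite exprn_ege1.
  rewrite /K; lra.
have [alpha [gamma [wE g0]]] := w_decomp.
have dvis_ge0 z : 0 <= dvis y z := sqrtr_ge0 _.
have dE_le z : chain w z -> dE p w <= K * dvis y z.
  move=> zL; apply: le_scale_of_sqr K1 (dE_ge0 _ _) (dvis_ge0 z) _.
  by rewrite sqr_dvis; exact: sqr_dE_le_dvis2 wE g0 z zL.
set S := [set dvis y z | z in chain w].
have S0 : S !=set0 by exists (dvis y x), x => //; split.
have S_lb : has_lbound S by exists 0 => _ [z _ <-].
have K_gt0 : 0 < K := lt_le_trans ltr01 K1.
split.
- rewrite mulrC ler_pdivrMr // mulrC.
  have [z zL zb] := exists_chain_dvis2_le wE g0.
  apply: le_trans (ge_inf S_lb _) _; first by exists z.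
  apply: le_scale_of_sqr K1 (dvis_ge0 z) (dE_ge0 _ _) _.
  by rewrite sqr_dvis.
- rewrite mulrC -ler_pdivrMr //; apply: lb_le_inf S0 _ => _ [z zL <-].
  by rewrite ler_pdivrMr // mulrC dE_le.
Qed.

End Configuration.

Theorem lemma5p10 (R : realType) (K1 K2 : set (vec R)) :
  K1 `<=` S3 (R:=R) -> K2 `<=` S3 (R:=R) ->
  pcompact K1 -> pcompact K2 ->
  K1 !=set0 -> K2 !=set0 ->
  (forall u v, K1 u -> K2 v -> ~ proj_eq u v) ->
  exists C : R, 1 <= C /\
    forall x y w : vec R, K1 x -> K2 y -> LC w ->
      chain w x -> (exists z, chain w z /\ K2 z) ->
      forall p : vec R, is_pi x y p ->
        C^-1 * dist_chain y w <= dE p w /\ dE p w <= C * dist_chain y w.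
Proof.
move=> S1 S2 cK1 cK2 _ _ disj.
have [d d_gt0 d_le] := dvis2_bounded_below S1 S2 cK1 cK2 disj.
pose E := Num.max 1 d^-1.
have E_ge1 : 1 <= E by rewrite le_max lexx.
exists (8 * E ^+ 9); split.
  have : 1 <= E ^+ 9 by rewrite exprn_ege1.
  lra.
move=> x y w Kx Ky w_LC [Sx xw] _ p p_pi.
have Sy := S2 _ Ky.
have XY_gt0 : 0 < enorm x * enorm y by rewrite mulr_gt0 ?enorm_gt0 //; [case: Sx | case: Sy].
apply: dist_chain_comparable E_ge1 Sx Sy _ w_LC xw p_pi.
have dXY : d * (enorm x * enorm y) <= Normc.normc (herm x y).
  by move: (d_le x y Kx Ky); rewrite /dvis2 ler_pdivlMr // mulrC.
apply: le_trans (_ : _ <= d^-1 * Normc.normc (herm x y)) _.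
  by rewrite -(ler_pM2l d_gt0) mulVKf ?gt_eqF.
by apply: ler_wpM2r; [exact: normc_ge0 | rewrite le_max lexx orbT].
Qed.
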